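(* The simplicial generators $\{h_S:\emptyset\subsetneq S\subseteq E\}$ form a basis of $A^1(X_{\mathbf a})$. In particular, monomials in them span $A^\bullet(X_{\mathbf a})$ as an abelian group.
   Context: $E=\{1,\dots,m\}$, $\mathbf a\in\mathbb Z^m_{\ge0}$, $n=\sum a_i$, $\widetilde E$ an $n$-element set, $\pi:\widetilde E\to E$ with $|\pi^{-1}(i)|=a_i$, $\mathbf e_U=\sum_{j\in U}\mathbf e_j$. The polystellahedral fan $\Sigma_{\mathbf a}\subset\mathbb R^{\widetilde E}$ has cones $\operatorname{cone}(-\mathbf e_{\widetilde E\setminus\pi^{-1}(F_1)},\dots,-\mathbf e_{\widetilde E\setminus\pi^{-1}(F_k)},\mathbf e_j:j\in I)$ for $I\subseteq\widetilde E$ and chains $F_1\subsetneq\dots\subsetneq F_k\subsetneq F_{k+1}=E$ ($k\ge0$) with $\pi^{-1}(A)\subseteq I\Rightarrow A\subseteq F_1$; $X_{\mathbf a}$ is its smooth projective toric variety and $A^\bullet(X_{\mathbf a})$ its Chow ring. For $\emptyset\subseteq T\subsetneq E$, $x_T$ is the divisor class of the ray $\mathbb R_{\ge0}(-\mathbf e_{\widetilde E\setminus\pi^{-1}(T)})$. For nonempty $S\subseteq E$, $h_S=\sum_{\emptyset\subseteq T\subsetneq E,\ T\not\supseteq S}x_T$. *)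

From mathcomp Require Import all_boot all_order all_algebra.
From mathcomp Require Import mpoly.
Set Implicit Arguments. Unset Strict Implicit. Unset Printing Implicit Defensive.
Import GRing.Theory.
Local Open Scope ring_scope.

(* Polystellahedral fan Sigma_a and the Chow ring of X_a, via the
   Danilov-Jurkiewicz presentation  Z[x_rho] / (I_SR + J).
   E = 'I_m, Et a finite type (the n-element set E~), pi : Et -> 'I_m. *)

Section XPoly.
Variables (m : nat) (Et : finType) (pi : Et -> 'I_m).

(* proper subsets T of E (index the rays -e_{Et \ pi^-1(T)}) *)
Definition propset := {T : {set 'I_m} | T != setT}.
Definition neset := {S : {set 'I_m} | S != set0}.

(* rays of Sigma_a: inl T  <-> -e_{Et \ pi^-1(T)},  inr j <-> e_j *)
Definition ray : finType := (propset + Et)%type.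

Definition nrays := #|{: ray}|.
Definition XPoly := {mpoly int[nrays]}.

Definition xvar (r : ray) : XPoly := 'X_(enum_rank r).

Definition xT (T : propset) : XPoly := xvar (inl T).

Definition cone_rays (I : {set Et}) (Fs : {set propset}) : {set ray} :=
  [set r : ray | match r with inl T => T \in Fs | inr j => j \in I end].

(* Fs is a chain F_1 < ... < F_k of proper subsets; F_1 is the
   intersection of the chain (= E if k = 0) *)
Definition is_chain (Fs : {set propset}) : Prop :=
  forall F G : propset, F \in Fs -> G \in Fs ->
    (val F \subset val G) \/ (val G \subset val F).

Definition F1 (Fs : {set propset}) : {set 'I_m} :=
  \bigcap_(F in Fs) val F.

Definition is_cone_of_fan (I : {set Et}) (Fs : {set propset}) : Prop :=
  is_chain Fs /\
  forall A : {set 'I_m}, pi @^-1: A \subset I -> A \subset F1 Fs.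

Definition is_face (C : {set ray}) : Prop :=
  exists I Fs, is_cone_of_fan I Fs /\ C = cone_rays I Fs.

(* linear relation for the dual basis vector e_j^*:
   sum_rho <e_j^*, v_rho> x_rho *)
Definition lin_rel (j : Et) : XPoly :=
  xvar (inr j) - \sum_(T : propset | pi j \notin val T) xT T.

Definition chow_gen (p : XPoly) : Prop :=
  (exists C : {set ray}, ~ is_face C /\ p = \prod_(r in C) xvar r)
  \/ (exists j : Et, p = lin_rel j).

Definition in_ideal (G : XPoly -> Prop) (p : XPoly) : Prop :=
  exists s : seq (XPoly * XPoly),
    (forall x, x \in s -> G x.2) /\ p = \sum_(x <- s) x.1 * x.2.

Definition chow_eq (p q : XPoly) : Prop := in_ideal chow_gen (p - q).

Definition hS (S : neset) : XPoly :=
  \sum_(T : propset | ~~ (val S \subset val T)) xT T.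

Definition linform (d : ray -> int) : XPoly :=
  \sum_(r : ray) d r *: xvar r.

Definition hcomb (c : neset -> int) : XPoly :=
  \sum_(S : neset) c S *: hS S.

Definition eval_h (q : {mpoly int[#|{: neset}|]}) : XPoly :=
  comp_mpoly [tuple hS (enum_val i) | i < #|{: neset}|] q.

End XPoly.

From HB Require Import structures.
From mathcomp Require Import all_boot all_order all_algebra.
From mathcomp Require Import mpoly.
From mathcomp Require Import ring.
Set Implicit Arguments. Unset Strict Implicit. Unset Printing Implicit Defensive.
Import GRing.Theory.
Local Open Scope ring_scope.

(* Modulo the linear relations x_j = sum_(pi j \notin T) x_T every ray variable
   is congruent to a combination of the x_T, and each x_T is an integer
   combination of the h_S by downward induction on T, because
   h_E - h_T = sum_(T' \supseteq T) x_T' (and h_E alone is that sum for T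
   empty).  As monomials in the ray variables span the polynomial ring, this
   gives both spanning statements.
   For independence, fix a proper T0 and take the coefficient of x_T0 after
   eliminating the x_j.  It is a derivation at the origin that kills the linear
   relations by construction, and kills the Stanley-Reisner monomials because
   sets of at most one ray are cones (every fibre of pi is nonempty), so those
   monomials have degree at least 2.  It maps h_S to [S \not\subseteq T0], and
   this unitriangular system forces all coefficients to vanish. *)

Section SetInduction.
Variable T : finType.

Lemma proper_ind (P : {set T} -> Prop) :
  (forall A : {set T}, (forall B : {set T}, B \proper A -> P B) -> P A) ->
  forall A, P A.
Proof.
move=> IH A; elim: {A}#|A|.+1 {-2}A (ltnSn #|A|) => // k IHk A leAk.
by apply: IH => B ltBA; apply: IHk; apply: leq_trans (proper_card ltBA) _.
Qed.

Lemma superset_ind (P : {set T} -> Prop) :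
  (forall A : {set T}, (forall B : {set T}, A \proper B -> P B) -> P A) ->
  forall A, P A.
Proof.
move=> IH A; rewrite -[A]setCK; elim/proper_ind: (~: A) => {}A IHA.
by apply: IH => B; rewrite -properC setCK => /IHA; rewrite setCK.
Qed.

End SetInduction.

Lemma mpoly_ring_ind (n : nat) (R : comNzRingType) (P : {mpoly R[n]} -> Prop) :
  P 1 -> (forall i, P 'X_i) ->
  (forall c p, P p -> P (c *: p)) ->
  (forall p q, P p -> P q -> P (p + q)) ->
  (forall p q, P p -> P q -> P (p * q)) ->
  forall p, P p.
Proof.
move=> P1 PX PZ PD PM; elim/mpolyind => [|c mm p _ _ Pp].
  by rewrite -(scale0r 1); apply: PZ.
apply: PD => //; apply: PZ; rewrite mpolyXE_id.
apply: (big_ind P P1 PM) => i _; elim: (mm i) => [|k IHk].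
  by rewrite expr0.
by rewrite exprS; apply: PM.
Qed.

Section DerivativeAtZero.
Variables (n : nat) (R : comNzRingType).
Implicit Types (w : 'I_n -> R) (p q : {mpoly R[n]}).

Definition mderiv0 w p : R := \sum_i w i * (p^`M(i)).@[fun _ => 0].

Lemma mderiv0_is_zmod_morphism w : zmod_morphism (mderiv0 w).
Proof.
move=> p q; rewrite /mderiv0 -sumrB; apply: eq_bigr => i _.
by rewrite mderivB mevalB mulrBr.
Qed.

HB.instance Definition _ w :=
  GRing.isZmodMorphism.Build {mpoly R[n]} R (mderiv0 w)
    (mderiv0_is_zmod_morphism w).

Lemma mderiv0Z w c p : mderiv0 w (c *: p) = c * mderiv0 w p.
Proof.
rewrite /mderiv0 mulr_sumr; apply: eq_bigr => i _.
by rewrite mderivZ mevalZ mulrCA.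
Qed.

Lemma mderiv0X w i : mderiv0 w 'X_i = w i.
Proof.
rewrite /mderiv0 (bigD1 i) //= big1 => [|j neji]; last first.
  by rewrite mderivX mnm1E eq_sym (negbTE neji) scale0r meval0 mulr0.
rewrite mderivX mnm1E eqxx scale1r mevalX big1 ?mulr1 ?addr0 // => k _.
by rewrite mnmBE mnm1E; case: eqP; rewrite ?subnn ?subn0 expr0.
Qed.

Lemma mderiv0M w p q :
  mderiv0 w (p * q) =
  mderiv0 w p * q.@[fun _ => 0] + p.@[fun _ => 0] * mderiv0 w q.
Proof.
rewrite /mderiv0 mulr_suml mulr_sumr -big_split; apply: eq_bigr => i _ /=.
rewrite mderivM mevalD !mevalM; ring.
Qed.

End DerivativeAtZero.

Section Ideal.
Variables (m : nat) (Et : finType) (G : XPoly m Et -> Prop).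
Implicit Types p q : XPoly m Et.

Lemma in_ideal0 : in_ideal G 0.
Proof. by exists [::]; split => //; rewrite big_nil. Qed.

Lemma in_idealD p q : in_ideal G p -> in_ideal G q -> in_ideal G (p + q).
Proof.
move=> [s [Gs ->]] [t [Gt ->]]; exists (s ++ t); split; last by rewrite big_cat.
by move=> x; rewrite mem_cat => /orP [/Gs|/Gt].
Qed.

Lemma in_idealMl r p : in_ideal G p -> in_ideal G (r * p).
Proof.
move=> [s [Gs ->]]; exists [seq (r * x.1, x.2) | x <- s]; split.
  by move=> x /mapP [y /Gs Gy ->].
by rewrite big_map mulr_sumr; apply: eq_bigr => x _; rewrite mulrA.
Qed.

Lemma in_ideal_gen g : G g -> in_ideal G g.
Proof.
move=> Gg; exists [:: (1, g)]; split; first by move=> x; rewrite inE => /eqP ->.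
by rewrite big_seq1 mul1r.
Qed.

Lemma in_ideal_mderiv0 (w : 'I_(nrays m Et) -> int) p :
  (forall g, G g -> g.@[fun _ => 0] = 0 /\ mderiv0 w g = 0) ->
  in_ideal G p -> mderiv0 w p = 0.
Proof.
move=> Gw [s [Gs ->]]; rewrite raddf_sum big_seq big1 // => x /Gs /Gw [g0 wg].
by rewrite /= mderiv0M g0 wg !mulr0 addr0.
Qed.

End Ideal.

Section Congruence.
Variables (m : nat) (Et : finType) (pi : Et -> 'I_m).
Implicit Types p q : XPoly m Et.

Lemma chow_eq_refl p : chow_eq pi p p.
Proof. by rewrite /chow_eq subrr; apply: in_ideal0. Qed.

Lemma chow_eq_trans q p r : chow_eq pi p q -> chow_eq pi q r -> chow_eq pi p r.
Proof. by rewrite /chow_eq -[p - r](subrKA q); apply: in_idealD. Qed.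

Lemma chow_eqD p1 p2 q1 q2 :
  chow_eq pi p1 q1 -> chow_eq pi p2 q2 -> chow_eq pi (p1 + p2) (q1 + q2).
Proof. by rewrite /chow_eq opprD addrACA; apply: in_idealD. Qed.

Lemma chow_eqM p1 p2 q1 q2 :
  chow_eq pi p1 q1 -> chow_eq pi p2 q2 -> chow_eq pi (p1 * p2) (q1 * q2).
Proof.
rewrite /chow_eq => e1 e2.
have -> : p1 * p2 - q1 * q2 = p2 * (p1 - q1) + q1 * (p2 - q2) by ring.
by apply: in_idealD; apply: in_idealMl.
Qed.

Lemma chow_eqZ (c : int) p q : chow_eq pi p q -> chow_eq pi (c *: p) (c *: q).
Proof. by rewrite /chow_eq -scalerBr -mul_mpolyC; apply: in_idealMl. Qed.

Lemma chow_eq_xvar_inr j :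
  chow_eq pi (xvar (inr j)) (\sum_(T : propset m | pi j \notin val T) xT Et T).
Proof. by apply: in_ideal_gen; right; exists j. Qed.

End Congruence.

Lemma meval0_xvar (m : nat) (Et : finType) (r : ray m Et) :
  (xvar r).@[fun _ => 0] = 0 :> int.
Proof. by rewrite /xvar mevalXU. Qed.

Lemma prod_xvar_vanish2 (m : nat) (Et : finType) (C : {set ray m Et}) w :
  (1 < #|C|)%N ->
  (\prod_(r in C) xvar r).@[fun _ => 0] = 0 /\
  mderiv0 w (\prod_(r in C) xvar r) = 0.
Proof.
case/card_gt1P => r1 [r2 [r1C r2C ne12]].
rewrite (bigD1 r1) //= (bigD1 r2) /=; last by rewrite r2C eq_sym.
by rewrite mderiv0M !mevalM !meval0_xvar !mul0r mulr0 addr0.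
Qed.

Section Faces.
Variables (m : nat) (Et : finType) (pi : Et -> 'I_m).
Hypothesis pi_onto : forall i, exists j, pi j = i.

Lemma is_cone_of_fan_set0 I : is_cone_of_fan pi I set0.
Proof.
split=> [F G|A _]; first by rewrite inE.
by rewrite /F1 big_set0 subsetT.
Qed.

Lemma is_face_card_le1 (C : {set ray m Et}) : (#|C| <= 1)%N -> is_face pi C.
Proof.
rewrite leq_eqVlt ltnS leqn0 cards_eq0 => /orP [/cards1P [[T|j] ->]|/eqP ->].
- exists set0, [set T]; split; last by apply/setP => -[T'|j']; rewrite !inE.
  split=> [F G|A sAI]; first by rewrite !inE => /eqP -> /eqP ->; left.
  apply/subsetP => i iA; have [j pij] := pi_onto i.
  by have := subsetP sAI j; rewrite !inE pij => /(_ iA).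
- exists [set j], set0; split; first exact: is_cone_of_fan_set0.
  by apply/setP => -[T'|j']; rewrite !inE.
- exists set0, set0; split; first exact: is_cone_of_fan_set0.
  by apply/setP => -[T'|j']; rewrite !inE.
Qed.

Lemma chow_gen_mderiv0 w g :
  (forall j, mderiv0 w (lin_rel pi j) = 0) ->
  chow_gen pi g -> g.@[fun _ => 0] = 0 /\ mderiv0 w g = 0.
Proof.
move=> w_lin [[C [nfC ->]]|[j ->]]; last first.
  split=> //; rewrite /lin_rel mevalB meval0_xvar [X in _ - X]raddf_sum.
  by rewrite big1 ?subr0 // => T _; apply: meval0_xvar.
apply: prod_xvar_vanish2; rewrite ltnNge; apply/negP.
by move/is_face_card_le1.
Qed.

End Faces.

Section Spanning.
Variables (m : nat) (Et : finType) (pi : Et -> 'I_m).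
Implicit Types p q : XPoly m Et.

Definition in_hspan p := exists c, chow_eq pi p (hcomb Et c).

Lemma in_hspan_chow_eq p q : chow_eq pi p q -> in_hspan q -> in_hspan p.
Proof. by move=> epq [c eqc]; exists c; apply: chow_eq_trans eqc. Qed.

Lemma in_hspanD p q : in_hspan p -> in_hspan q -> in_hspan (p + q).
Proof.
move=> [c ec] [d ed]; exists (fun S => c S + d S).
suff -> : hcomb Et (fun S => c S + d S) = hcomb Et c + hcomb Et d.
  exact: chow_eqD.
by rewrite /hcomb -big_split; apply: eq_bigr => S _; rewrite scalerDl.
Qed.

Lemma in_hspanZ (z : int) p : in_hspan p -> in_hspan (z *: p).
Proof.
move=> [c ec]; exists (fun S => z * c S).
suff -> : hcomb Et (fun S => z * c S) = z *: hcomb Et c by apply: chow_eqZ.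
by rewrite /hcomb scaler_sumr; apply: eq_bigr => S _; rewrite scalerA.
Qed.

Lemma in_hspanB p q : in_hspan p -> in_hspan q -> in_hspan (p - q).
Proof.
by move=> hp hq; apply: in_hspanD => //; rewrite -scaleN1r; apply: in_hspanZ.
Qed.

Lemma in_hspan_sum (I : Type) (r : seq I) (P : pred I) (F : I -> XPoly m Et) :
  (forall i, P i -> in_hspan (F i)) -> in_hspan (\sum_(i <- r | P i) F i).
Proof.
move=> hF; apply: big_ind => //; last exact: in_hspanD.
exists (fun=> 0); rewrite /hcomb big1 => [|S _]; last exact: scale0r.
exact: chow_eq_refl.
Qed.

Lemma in_hspan_hS S : in_hspan (hS Et S).
Proof.
exists (fun S' => (S' == S)%:R); rewrite /hcomb (bigD1 S) //= eqxx scale1r.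
rewrite big1 ?addr0 => [|S' /negbTE ->]; last by rewrite scale0r.
exact: chow_eq_refl.
Qed.

Lemma in_hspan_supsets (i0 : 'I_m) (A : {set 'I_m}) :
  in_hspan (\sum_(T : propset m | A \subset val T) xT Et T).
Proof.
have E_neq0 : [set: 'I_m] != set0 by apply/set0Pn; exists i0.
pose E : neset m := exist _ setT E_neq0.
have hE : hS Et E = \sum_(T : propset m) xT Et T.
  by apply: eq_bigl => T /=; rewrite subTset (negbTE (valP T)).
have [->|A_neq0] := eqVneq A set0.
  under eq_bigl do rewrite sub0set.
  by rewrite -hE; apply: in_hspan_hS.
have -> : \sum_(T : propset m | A \subset val T) xT Et T
        = hS Et E - hS Et (exist _ A A_neq0).
  by rewrite hE [in RHS](bigID (fun T : propset m => A \subset val T)) /= addrK.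
by apply: in_hspanB; apply: in_hspan_hS.
Qed.

Lemma in_hspan_xT T : in_hspan (xT Et T).
Proof.
move: {2}(val T) (erefl (val T)) => A; elim/superset_ind: A T => A IHA T defA.
have /subsetPn [i0 _ _] : ~~ ([set: 'I_m] \subset val T).
  by rewrite subTset (valP T).
have -> : xT Et T = \sum_(T' : propset m | val T \subset val T') xT Et T'
                  - \sum_(T' : propset m | val T \proper val T') xT Et T'.
  rewrite (bigD1 T) //= -addrA -[LHS]addr0; congr (_ + _).
  apply/esym/eqP; rewrite subr_eq0; apply/eqP/eq_bigl => T'.
  by rewrite properEneq andbC val_eqE eq_sym.
apply: in_hspanB; first exact: in_hspan_supsets i0 _.
by apply: in_hspan_sum => T' ltTT'; apply: (IHA (val T')); rewrite -?defA.
Qed.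

Lemma in_hspan_xvar r : in_hspan (xvar r).
Proof.
case: r => [T|j]; first exact: in_hspan_xT.
apply: in_hspan_chow_eq (chow_eq_xvar_inr pi j) _.
by apply: in_hspan_sum => T _; apply: in_hspan_xT.
Qed.

Lemma in_hspan_linform d : in_hspan (linform d).
Proof.
by apply: in_hspan_sum => r _; apply: in_hspanZ; apply: in_hspan_xvar.
Qed.

Lemma eval_h_hcomb (c : neset m -> int) :
  eval_h Et (\sum_S c S *: 'X_(enum_rank S)) = hcomb Et c.
Proof.
rewrite /eval_h raddf_sum; apply: eq_bigr => S _.
by rewrite /= comp_mpolyZ comp_mpolyXU -tnth_nth tnth_map tnth_ord_tuple enum_rankK.
Qed.

Lemma eval_h_onto p :
  exists q : {mpoly int[#|{: neset m}|]}, chow_eq pi p (eval_h Et q).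
Proof.
elim/mpoly_ring_ind: p
  => [|i|z p [q epq]|p1 p2 [q1 e1] [q2 e2]|p1 p2 [q1 e1] [q2 e2]].
- by exists 1; rewrite /eval_h comp_mpoly1; apply: chow_eq_refl.
- have [c ec] := in_hspan_xvar (enum_val i).
  by exists (\sum_S c S *: 'X_(enum_rank S)); rewrite eval_h_hcomb -[i]enum_valK.
- by exists (z *: q); rewrite /eval_h comp_mpolyZ; apply: chow_eqZ.
- by exists (q1 + q2); rewrite /eval_h raddfD; apply: chow_eqD.
- by exists (q1 * q2); rewrite /eval_h rmorphM; apply: chow_eqM.
Qed.

End Spanning.

Lemma sum_indicator (T : finType) (P : pred T) (t0 : T) :
  \sum_(t | P t) ((t == t0)%:R : int) = (P t0)%:R.
Proof.
rewrite big_mkcond (bigD1 t0) //= eqxx big1 ?addr0 => [|t /negbTE ->].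
  by case: (P t0).
by case: (P t).
Qed.

Lemma neset_coef_eq0 (m : nat) (c : neset m -> int) :
  (forall T : propset m, \sum_(S : neset m | ~~ (val S \subset val T)) c S = 0) ->
  forall S, c S = 0.
Proof.
move=> c_out S; have /set0Pn [i0 _] := valP S.
have set0_neqT : set0 != [set: 'I_m] by apply/eqP/setP => /(_ i0); rewrite !inE.
have c_all : \sum_(S : neset m) c S = 0.
  rewrite -[RHS](c_out (exist _ set0 set0_neqT)); apply: eq_bigl => S' /=.
  by rewrite subset0 (valP S').
have c_sub (A : {set 'I_m}) : \sum_(S : neset m | val S \subset A) c S = 0.
  have [->|A_neqT] := eqVneq A setT.
    by rewrite -[RHS]c_all; apply: eq_bigl => S'; rewrite subsetT.
  have := c_all; rewrite (bigID (fun S : neset m => val S \subset A)) /=.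
  by rewrite (c_out (exist _ A A_neqT)) addr0.
move: {2}(val S) (erefl (val S)) => A; elim/proper_ind: A S => A IHA S defA.
have := c_sub (val S); rewrite (bigD1 S) //= big1 ?addr0 // => S' /andP [S'S neS'].
by apply: (IHA (val S')) => //; rewrite -defA properEneq S'S andbT val_eqE.
Qed.

Section Independence.
Variables (m : nat) (Et : finType) (pi : Et -> 'I_m).
Hypothesis pi_onto : forall i, exists j, pi j = i.

Definition ray_weight (T0 : propset m) (r : ray m Et) : int :=
  match r with inl T => (T == T0)%:R | inr j => (pi j \notin val T0)%:R end.

(* The coefficient of x_T0 in the linear part of a polynomial once every x_j
   is replaced by sum_(pi j \notin T) x_T. *)
Definition xT_coord (T0 : propset m) : XPoly m Et -> int :=
  mderiv0 (fun i => ray_weight T0 (enum_val i)).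

HB.instance Definition _ T0 := GRing.Additive.on (xT_coord T0).

Lemma xT_coord_xvar T0 r : xT_coord T0 (xvar r) = ray_weight T0 r.
Proof. by rewrite /xT_coord /xvar mderiv0X enum_rankK. Qed.

Lemma xT_coord_hS T0 S : xT_coord T0 (hS Et S) = (~~ (val S \subset val T0))%:R.
Proof.
rewrite /hS raddf_sum /=.
under eq_bigr do rewrite /xT xT_coord_xvar.
exact: (sum_indicator (fun T : propset m => ~~ (val S \subset val T))).
Qed.

Lemma xT_coord_lin_rel T0 j : xT_coord T0 (lin_rel pi j) = 0.
Proof.
rewrite /lin_rel raddfB /= xT_coord_xvar (raddf_sum (xT_coord T0)) /=.
under eq_bigr do rewrite /xT xT_coord_xvar.
by rewrite (sum_indicator (fun T : propset m => pi j \notin val T)) subrr.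
Qed.

Lemma xT_coord_chow_eq0 T0 p : chow_eq pi p 0 -> xT_coord T0 p = 0.
Proof.
rewrite /chow_eq subr0; apply: in_ideal_mderiv0 => g.
by apply: chow_gen_mderiv0 => // j; apply: xT_coord_lin_rel.
Qed.

Lemma hcomb_chow_eq0 c : chow_eq pi (hcomb Et c) 0 -> forall S, c S = 0.
Proof.
move=> c0; apply: neset_coef_eq0 => T0; rewrite -[RHS](xT_coord_chow_eq0 T0 c0).
rewrite /hcomb raddf_sum big_mkcond; apply: eq_bigr => S _ /=.
rewrite /xT_coord mderiv0Z -/(xT_coord T0) xT_coord_hS.
by case: ifP; rewrite ?mulr1 ?mulr0.
Qed.

End Independence.

Theorem proposition2p10 (m : nat) (a : 'I_m -> nat) (Et : finType)
    (pi : Et -> 'I_m)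
    (Ha : forall i, (0 < a i)%N)
    (Hpi : forall i, #|pi @^-1: [set i]| = a i) :
  (* the h_S are linearly independent in A^1(X_a) *)
  (forall c : neset m -> int,
     chow_eq pi (hcomb Et c) 0 -> forall S, c S = 0) /\
  (* the h_S span A^1(X_a) *)
  (forall d : ray m Et -> int,
     exists c : neset m -> int, chow_eq pi (linform d) (hcomb Et c)) /\
  (* monomials in the h_S span A^*(X_a) as an abelian group *)
  (forall p : XPoly m Et,
     exists q : {mpoly int[#|{: neset m}|]}, chow_eq pi p (eval_h Et q)).
Proof.
have pi_onto i : exists j, pi j = i.
  have /card_gt0P [j] : (0 < #|pi @^-1: [set i]|)%N by rewrite Hpi.
  by rewrite !inE => /eqP; exists j.
split; first exact: hcomb_chow_eq0.
split; [exact: in_hspan_linform | exact: eval_h_onto].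
Qed.
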